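(* Let $R(x_1,\dots,x_n)$ be a 2-definable relation on $\mathcal M$ which is not definable in the pure equality language (i.e. $R$ is not preserved by all permutations of $\mathcal M$). Then the set $\{\vec 0\}$ is definable by $R$.
   Context: $\mathcal M$ denotes the $\mathbb Q$-vector space $\mathbb Q^{<\omega}$ of all sequences of rationals with only finitely many nonzero terms, with zero vector $\vec 0$. For a set $\Sigma$ of relations on $\mathcal M$, a relation is definable by $\Sigma$ if it is first-order definable without parameters in the structure $\langle\mathcal M;\Sigma\rangle$ (equality is always available). A relation is 2-definable if it is definable by the family of binary relations $\{\{(x,y):y=rx\}: r\in\mathbb Q\}$. *)

From HB Require Import structures.
From mathcomp Require Import all_boot all_order all_algebra.
Set Implicit Arguments. Unset Strict Implicit. Unset Printing Implicit Defensive.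
Import GRing.Theory Num.Theory.
Local Open Scope ring_scope.

(** The Q-vector space M = Q^{<omega}: finitely supported rational sequences. *)
Definition M : Type :=
  { f : nat -> rat | exists N : nat, forall k : nat, (N <= k)%N -> f k = 0 }.

Definition Mseq (x : M) : nat -> rat := proj1_sig x.

Definition Mzero_fun (k : nat) : rat := 0.
Lemma Mzero_fin : exists N : nat, forall k : nat, (N <= k)%N -> Mzero_fun k = 0.
Proof. by exists 0%N. Qed.
Definition Mzero : M := exist _ Mzero_fun Mzero_fin.

Lemma Mscale_fin (r : rat) (x : M) :
  exists N : nat, forall k : nat, (N <= k)%N -> r * Mseq x k = 0.
Proof.
case: x => f [N HN]; exists N => k Hk /=; by rewrite HN // mulr0.
Qed.
Definition Mscale (r : rat) (x : M) : M :=
  exist _ (fun k => r * Mseq x k) (Mscale_fin r x).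

Definition relM (n : nat) := ('I_n -> M) -> Prop.

Record signature := Signature {
  sig_idx : Type;
  sig_ar : sig_idx -> nat;
  sig_interp : forall i : sig_idx, relM (sig_ar i)
}.

Inductive formula (S : signature) : Type :=
| FEq : nat -> nat -> formula S
| FRel : forall i : sig_idx S, ('I_(sig_ar i) -> nat) -> formula S
| FFalse : formula S
| FNot : formula S -> formula S
| FAnd : formula S -> formula S -> formula S
| FOr : formula S -> formula S -> formula S
| FImp : formula S -> formula S -> formula S
| FEx : nat -> formula S -> formula S
| FAll : nat -> formula S -> formula S.

Definition upd (e : nat -> M) (x : nat) (a : M) : nat -> M :=
  fun y => if y == x then a else e y.

Fixpoint sat (S : signature) (e : nat -> M) (phi : formula S) : Prop :=
  match phi with
  | FEq x y => e x = e y
  | FRel i args => @sig_interp S i (fun j => e (args j))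
  | FFalse => False
  | FNot p => ~ sat e p
  | FAnd p q => sat e p /\ sat e q
  | FOr p q => sat e p \/ sat e q
  | FImp p q => sat e p -> sat e q
  | FEx x p => exists a : M, sat (upd e x a) p
  | FAll x p => forall a : M, sat (upd e x a) p
  end.

Definition definable (S : signature) (n : nat) (R : relM n) : Prop :=
  exists phi : formula S,
    forall e : nat -> M, R (fun i : 'I_n => e (nat_of_ord i)) <-> sat e phi.

Definition sig_eq : signature :=
  @Signature Empty_set (fun _ => 0%N) (fun i => match i with end).

Definition sig_scal : signature :=
  @Signature rat (fun _ => 2%N)
    (fun r (v : 'I_2 -> M) => v (@Ordinal 2 1 isT) = Mscale r (v (@Ordinal 2 0 isT))).

Definition sig_single (n : nat) (R : relM n) : signature :=
  @Signature unit (fun _ => n) (fun _ => R).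

Definition two_definable (n : nat) (R : relM n) : Prop := definable sig_scal R.

Definition zero_rel : relM 1 := fun v => v ord0 = Mzero.

From mathcomp Require Import all_boot all_order all_algebra zify.
From Stdlib Require Import Classical FunctionalExtensionality ProofIrrelevance.
Set Implicit Arguments. Unset Strict Implicit. Unset Printing Implicit Defensive.
Import GRing.Theory Num.Theory.

(* Call two assignments equivalent over a finite set G of ratios and a finite set V
   of variables when they satisfy the same relations [x_i = q x_j] (i, j in V, q in G).
   Since M is infinite-dimensional there is always room for a fresh vector, so a
   back-and-forth argument shows that a scalar-multiplication formula of quantifier
   depth d cannot distinguish assignments equivalent over the ratios obtained from its
   own by d rounds of multiplying and inverting.  Hence every relation definable from a
   2-definable R is invariant under such an equivalence, for some finite G.

   If {0} is not definable from R, induction on the number of variables shows that every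
   relation definable from R only sees which of its arguments are equal.  With one
   variable, invariance leaves only "zero or not", and a relation separating the two
   would define {0}.  With two, quantifying the first variable over values distinct from
   the second reduces to one variable.  With three or more, a relation distinguishing
   two injective assignments can be moved, by quantifying the first variable, to a
   configuration whose first value lies on a coordinate axis; quantifying another
   variable over fresh values then identifies that configuration with the standard
   basis, a contradiction.  Finally a relation that only sees equalities between its
   arguments is a disjunction of equality types, hence definable in pure equality. *)

(** * The vector space M *)

Lemma M_ext (x y : M) : (forall k, Mseq x k = Mseq y k) -> x = y.
Proof.
case: x => f Hf; case: y => g Hg /= H.
have E : f = g by apply: functional_extensionality.
subst g; f_equal; exact: proof_irrelevance.
Qed.

Lemma Mseq_scale r x k : Mseq (Mscale r x) k = (r * Mseq x k)%R.
Proof. by []. Qed.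

Lemma Mseq_zero k : Mseq Mzero k = 0%R.
Proof. by []. Qed.

Lemma MscaleA p q x : Mscale p (Mscale q x) = Mscale (p * q)%R x.
Proof. by apply: M_ext => k; rewrite !Mseq_scale mulrA. Qed.

Lemma Mscale1r x : Mscale 1%R x = x.
Proof. by apply: M_ext => k; rewrite Mseq_scale mul1r. Qed.

Lemma Mscale0r x : Mscale 0%R x = Mzero.
Proof. by apply: M_ext => k; rewrite Mseq_scale mul0r. Qed.

Lemma Mscaler0 q : Mscale q Mzero = Mzero.
Proof. by apply: M_ext => k; rewrite Mseq_scale Mseq_zero mulr0. Qed.

Lemma Mscale_inj q x y : q != 0%R -> Mscale q x = Mscale q y -> x = y.
Proof.
by move=> q0 /(congr1 (Mscale q^-1)); rewrite !MscaleA mulVf // !Mscale1r.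
Qed.

Lemma Mseq_neq0 x : x <> Mzero -> exists k, Mseq x k != 0%R.
Proof.
move=> x0; apply: NNPP => Hx; apply: x0; apply: M_ext => k.
by apply: NNPP => xk; apply: Hx; exists k; apply/eqP.
Qed.

Lemma Mscale_fix x q : x <> Mzero -> (x = Mscale q x <-> q = 1%R).
Proof.
move=> x0; split=> [E|->]; last by rewrite Mscale1r.
have [k xk] := Mseq_neq0 x0.
have /eqP : Mseq x k = (q * Mseq x k)%R by rewrite {1}E.
rewrite -subr_eq0 -{1}(mul1r (Mseq x k)) -mulrBl mulf_eq0 (negbTE xk) orbF.
by rewrite subr_eq0 eq_sym => /eqP.
Qed.

Lemma Mscale_eq0 q x : Mscale q x = Mzero <-> q = 0%R \/ x = Mzero.
Proof.
split=> [E|[->|->]]; rewrite ?Mscale0r ?Mscaler0 //.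
case: (eqVneq q 0%R) => [|q0]; [by left | right].
by apply: (@Mscale_inj q) => //; rewrite Mscaler0.
Qed.

Lemma Mzero_eq_scale q x : Mzero = Mscale q x <-> q = 0%R \/ x = Mzero.
Proof. by rewrite -Mscale_eq0; split=> ->. Qed.

Lemma Mscale_eq_inv r q y z : r != 0%R ->
  (Mscale r y = Mscale q z <-> y = Mscale (r^-1 * q)%R z).
Proof.
move=> r0; split=> [/(congr1 (Mscale r^-1))|->].
  by rewrite !MscaleA mulVf // Mscale1r.
by rewrite MscaleA mulrA divff // mul1r.
Qed.

Lemma scale_self_iff a a' q : (a = Mzero <-> a' = Mzero) ->
  (a = Mscale q a <-> a' = Mscale q a').
Proof.
move=> Ha; case: (classic (a = Mzero)) => a0.
  by rewrite a0 (proj1 Ha a0) !Mscaler0.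
have a'0 : a' <> Mzero by move/Ha.
by rewrite (Mscale_fix q a0) (Mscale_fix q a'0).
Qed.

Lemma Munit_fin N :
  exists K, forall k, (K <= k)%N -> (if k == N then 1%R else 0%R : rat) = 0%R.
Proof. by exists N.+1 => k; case: eqVneq => [->|//]; rewrite ltnn. Qed.

Definition Munit N : M :=
  exist _ (fun k => if k == N then 1%R else 0%R) (Munit_fin N).

Lemma Mseq_unit N k : Mseq (Munit N) k = (if k == N then 1%R else 0%R).
Proof. by []. Qed.

Lemma Munit_neq0 N : Munit N <> Mzero.
Proof.
move=> /(congr1 (Mseq^~ N)); rewrite Mseq_unit eqxx Mseq_zero.
by move/eqP; rewrite oner_eq0.
Qed.

Lemma Munit_inj : injective Munit.
Proof.
move=> a b /(congr1 (Mseq^~ a)); rewrite !Mseq_unit eqxx.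
by case: eqP => // _ /eqP; rewrite eq_sym oner_eq0.
Qed.

Lemma Munit_neq_scale N x q : Mseq x N = 0%R -> Munit N <> Mscale q x.
Proof.
move=> xN /(congr1 (Mseq^~ N)); rewrite Mseq_scale Mseq_unit eqxx xN mulr0.
by move/eqP; rewrite oner_eq0.
Qed.

Lemma neq_scale_Munit N x q : Mseq x N = 0%R -> q != 0%R -> x <> Mscale q (Munit N).
Proof.
move=> xN q0 /(congr1 (Mseq^~ N)); rewrite Mseq_scale Mseq_unit eqxx xN mulr1.
by move=> q0'; rewrite -q0' eqxx in q0.
Qed.

Lemma support_bound (V : seq nat) (f : nat -> M) :
  exists N, forall k i, k \in V -> (N <= i)%N -> Mseq (f k) i = 0%R.
Proof.
elim: V => [|v V [N HN]]; first by exists 0%N.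
have [Nv HNv] := proj2_sig (f v).
exists (maxn N Nv) => k i; rewrite inE => /orP[/eqP->|kV] Ni.
  by apply: HNv; apply: leq_trans Ni; exact: leq_maxr.
by apply: HN => //; apply: leq_trans Ni; exact: leq_maxl.
Qed.

Lemma upd_eq (e : nat -> M) x a : upd e x a x = a.
Proof. by rewrite /upd eqxx. Qed.

Lemma upd_neq (e : nat -> M) x a y : y != x -> upd e x a y = e y.
Proof. by rewrite /upd => /negbTE->. Qed.

Lemma upd_same (e : nat -> M) x : upd e x (e x) = e.
Proof. by apply: functional_extensionality => y; rewrite /upd; case: eqP => [->|]. Qed.

(** * Ratio equivalence and the back-and-forth step *)

Definition ratio_equiv (G : seq rat) (V : seq nat) (e e' : nat -> M) :=
  forall i j, i \in V -> j \in V -> forall q, q \in G ->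
    (e i = Mscale q (e j) <-> e' i = Mscale q (e' j)).

Lemma ratio_equiv_sym G V e e' : ratio_equiv G V e e' -> ratio_equiv G V e' e.
Proof. by move=> H i j iV jV q qG; rewrite (H i j iV jV q qG). Qed.

Lemma ratio_equiv_sub_ratios G G' V e e' :
  {subset G' <= G} -> ratio_equiv G V e e' -> ratio_equiv G' V e e'.
Proof. by move=> sG H i j iV jV q /sG; exact: H. Qed.

Lemma ratio_equiv_sub_vars G V V' e e' :
  {subset V' <= V} -> ratio_equiv G V e e' -> ratio_equiv G V' e e'.
Proof. by move=> sV H i j /sV iV /sV jV; exact: H. Qed.

Lemma ratio_equiv_zero G V e e' i : 0%R \in G -> ratio_equiv G V e e' -> i \in V ->
  (e i = Mzero <-> e' i = Mzero).
Proof. by move=> G0 H iV; have := H i i iV iV 0%R G0; rewrite !Mscale0r. Qed.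

Definition ratio_closure (G : seq rat) : seq rat :=
  [:: 0%R, 1%R & G ++ map GRing.inv G].

(* A back-and-forth step placing a new point at [r e_k] turns a condition
   [a = q e_j] on it into [e_k = r^-1 q e_j]: ratios multiply. *)
Definition ratio_step (G : seq rat) : seq rat :=
  [seq (p * q)%R | p <- ratio_closure G, q <- ratio_closure G].

Lemma mem_ratio_closure G q : q \in G -> q \in ratio_closure G.
Proof. by move=> qG; rewrite !inE mem_cat qG !orbT. Qed.

Lemma ratio_closure1 G : 1%R \in ratio_closure G.
Proof. by rewrite !inE eqxx orbT. Qed.

Lemma ratio_closureV G q : q \in ratio_closure G -> q^-1%R \in ratio_closure G.
Proof.
rewrite !inE mem_cat => /orP[/eqP->|/orP[/eqP->|/orP[qG|/mapP[p pG ->]]]].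
- by rewrite invr0 eqxx.
- by rewrite invr1 eqxx orbT.
- by rewrite mem_cat map_f ?orbT.
- by rewrite invrK mem_cat pG !orbT.
Qed.

Lemma ratio_step_mul G p q :
  p \in ratio_closure G -> q \in ratio_closure G -> (p * q)%R \in ratio_step G.
Proof. by move=> pG qG; exact: (allpairs_f (fun x y => (x * y)%R) pG qG). Qed.

Lemma mem_ratio_step G q : q \in G -> q \in ratio_step G.
Proof.
move=> qG; rewrite -(mulr1 q).
by apply: ratio_step_mul; [exact: mem_ratio_closure | exact: ratio_closure1].
Qed.

Lemma ratio_step0 G : 0%R \in ratio_step G.
Proof. by rewrite -(mulr0 0%R); apply: ratio_step_mul; rewrite inE eqxx. Qed.

Lemma ratio_equiv_upd G V x e e' a a' :
  ratio_equiv G V e e' -> (a = Mzero <-> a' = Mzero) ->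
  (forall j q, j \in V -> j != x -> q \in G ->
     (a = Mscale q (e j) <-> a' = Mscale q (e' j)) /\
     (e j = Mscale q a <-> e' j = Mscale q a')) ->
  ratio_equiv G (x :: V) (upd e x a) (upd e' x a').
Proof.
move=> H Ha Hx i j iV jV q qG.
have memV k : k \in x :: V -> k != x -> k \in V.
  by rewrite inE => /orP[/eqP->|//]; rewrite eqxx.
case: (eqVneq i x) => [->|ix]; case: (eqVneq j x) => [->|jx].
- by rewrite !upd_eq; exact: scale_self_iff.
- by rewrite !upd_eq !(upd_neq _ _ jx); exact: (Hx j q (memV j jV jx) jx qG).1.
- by rewrite !upd_eq !(upd_neq _ _ ix); exact: (Hx i q (memV i iV ix) ix qG).2.
- by rewrite !(upd_neq _ _ ix) !(upd_neq _ _ jx); exact: H (memV i iV ix) (memV j jV jx) q qG.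
Qed.

Lemma ratio_equiv_upd_zero G V x e e' :
  ratio_equiv G V e e' -> (forall j, j \in V -> (e j = Mzero <-> e' j = Mzero)) ->
  ratio_equiv G (x :: V) (upd e x Mzero) (upd e' x Mzero).
Proof.
move=> H Hz; apply: ratio_equiv_upd => // j q jV _ _.
by rewrite !Mzero_eq_scale !Mscaler0 (Hz j jV).
Qed.

Lemma ratio_equiv_upd_scale G V x k r e e' :
  ratio_equiv (ratio_step G) V e e' -> k \in V -> r \in ratio_closure G -> r != 0%R ->
  ratio_equiv G (x :: V) (upd e x (Mscale r (e k))) (upd e' x (Mscale r (e' k))).
Proof.
move=> H kV rG r0; apply: ratio_equiv_upd.
- by apply: ratio_equiv_sub_ratios H; exact: mem_ratio_step.
- by rewrite !Mscale_eq0 (ratio_equiv_zero (ratio_step0 G) H kV).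
move=> j q jV _ qG; rewrite !(Mscale_eq_inv _ _ _ r0) !MscaleA; split; apply: H => //.
  by apply: ratio_step_mul; [exact: ratio_closureV | exact: mem_ratio_closure].
by apply: ratio_step_mul; [exact: mem_ratio_closure | exact: rG].
Qed.

Definition fresh (G : seq rat) (W : seq nat) (e : nat -> M) (y : M) :=
  y <> Mzero /\ forall j q, j \in W -> q \in G -> q != 0%R ->
    y <> Mscale q (e j) /\ e j <> Mscale q y.

Lemma fresh_Munit G W e N : (forall j, j \in W -> Mseq (e j) N = 0%R) ->
  fresh G W e (Munit N).
Proof.
move=> eN; split=> [|j q jW _ q0]; first exact: Munit_neq0.
by split; [exact: Munit_neq_scale (eN j jW) | exact: neq_scale_Munit (eN j jW) q0].
Qed.

Lemma fresh_zero G W y : y <> Mzero -> fresh G W (fun _ => Mzero) y.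
Proof.
move=> y0; split=> // j q _ _ q0; split; first by rewrite Mscaler0.
by move/Mzero_eq_scale=> [/eqP|]; [rewrite (negbTE q0) | exact: y0].
Qed.

Lemma exists_fresh G W e (L : seq nat) (h : nat -> M) :
  exists y, fresh G W e y /\ forall k, k \in L -> y <> h k.
Proof.
have [N1 H1] := support_bound W e; have [N2 H2] := support_bound L h.
exists (Munit (maxn N1 N2)); split.
  by apply: fresh_Munit => j jW; apply: H1 => //; exact: leq_maxl.
move=> k kL; rewrite -[h k]Mscale1r; apply: Munit_neq_scale.
by apply: H2 => //; exact: leq_maxr.
Qed.

Lemma ratio_equiv_upd_fresh G V x e e' a a' :
  ratio_equiv G V e e' -> (forall j, j \in V -> (e j = Mzero <-> e' j = Mzero)) ->
  fresh G [seq v <- V | v != x] e a -> fresh G [seq v <- V | v != x] e' a' ->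
  ratio_equiv G (x :: V) (upd e x a) (upd e' x a').
Proof.
move=> H Hz [a0 Ha] [a'0 Ha']; apply: ratio_equiv_upd => [//||j q jV jx qG].
  by split=> E; [case: a0 | case: a'0].
have jW : j \in [seq v <- V | v != x] by rewrite mem_filter jx.
case: (eqVneq q 0%R) => [->|q0].
  by rewrite !Mscale0r; split; [split=> E; [case: a0 | case: a'0] | exact: Hz].
have [h1 h2] := Ha j q jW qG q0; have [h1' h2'] := Ha' j q jW qG q0.
by split; split=> E; exfalso; [exact: h1 E | exact: h1' E | exact: h2 E | exact: h2' E].
Qed.

Lemma ratio_equiv_extend G V e e' x a : ratio_equiv (ratio_step G) V e e' ->
  exists a', ratio_equiv G (x :: V) (upd e x a) (upd e' x a').
Proof.
move=> H.
have HG : ratio_equiv G V e e'.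
  by apply: ratio_equiv_sub_ratios H; exact: mem_ratio_step.
have Hz j : j \in V -> (e j = Mzero <-> e' j = Mzero).
  exact: ratio_equiv_zero (ratio_step0 G) H.
case: (classic (a = Mzero)) => [->|a0].
  by exists Mzero; exact: ratio_equiv_upd_zero.
case: (classic (exists k r, [/\ k \in V, r \in ratio_closure G, r != 0%R
                              & a = Mscale r (e k)])) => [[k [r [kV rG r0 ->]]]|Ha].
  by exists (Mscale r (e' k)); exact: ratio_equiv_upd_scale.
(* Now [a] is fresh for [e], and a basis vector beyond the supports of [e'] is
   fresh for [e']. *)
have [N HN] := support_bound V e'.
exists (Munit N); apply: ratio_equiv_upd_fresh => //.
  split=> // j q; rewrite mem_filter => /andP[_ jV] qG q0.
  split=> E; apply: Ha; first by exists j, q; split=> //; exact: mem_ratio_closure.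
  exists j, q^-1%R; split=> //; first exact/ratio_closureV/mem_ratio_closure.
    by rewrite invr_eq0.
  by rewrite E MscaleA mulVf // Mscale1r.
by apply: fresh_Munit => j; rewrite mem_filter => /andP[_ jV]; exact: HN.
Qed.

(** * Definable relations are invariant under ratio equivalence *)

Fixpoint fv {S : signature} (p : formula S) : seq nat :=
  match p with
  | FEq x y => [:: x; y]
  | @FRel _ i args => [seq args j | j <- enum 'I_(sig_ar i)]
  | FFalse => [::]
  | FNot p => fv p
  | FAnd p q | FOr p q | FImp p q => fv p ++ fv q
  | FEx x p | FAll x p => [seq y <- fv p | y != x]
  end.

Fixpoint depth {S : signature} (p : formula S) : nat :=
  match p with
  | FEq _ _ | FRel _ _ | FFalse => 0
  | FNot p => depth p
  | FAnd p q | FOr p q | FImp p q => maxn (depth p) (depth q)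
  | FEx _ p | FAll _ p => (depth p).+1
  end.

Fixpoint all_atoms {S : signature} (ok : sig_idx S -> Prop) (p : formula S) : Prop :=
  match p with
  | @FRel _ i _ => ok i
  | FNot p => all_atoms ok p
  | FAnd p q | FOr p q | FImp p q => all_atoms ok p /\ all_atoms ok q
  | FEx _ p | FAll _ p => all_atoms ok p
  | _ => True
  end.

Lemma all_atoms_true {S : signature} (p : formula S) : all_atoms (fun _ => True) p.
Proof. by elim: p => //= *; split. Qed.

Lemma fv_binder_sub (x : nat) (s V : seq nat) :
  {subset [seq y <- s | y != x] <= V} -> {subset s <= x :: V}.
Proof.
move=> sV z zs; rewrite inE; case: eqVneq => //= zx.
by apply: sV; rewrite mem_filter zx.
Qed.

Definition ratio_iter (G : seq rat) (k : nat) : seq rat := iter k ratio_step G.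

Lemma mem_ratio_iter G k q : q \in G -> q \in ratio_iter G k.
Proof. by elim: k => //= k IH qG; exact/mem_ratio_step/IH. Qed.

Definition depends_on (P : (nat -> M) -> Prop) (V : seq nat) :=
  forall e e', (forall i, i \in V -> e i = e' i) -> (P e <-> P e').

Definition restrict (V : seq nat) (e : nat -> M) : nat -> M :=
  fun k => if k \in V then e k else Mzero.

Lemma depends_on_restrict P V e : depends_on P V -> (P e <-> P (restrict V e)).
Proof. by move=> depP; apply: depP => i iV; rewrite /restrict iV. Qed.

Lemma ratio_equiv_restrict G V W e e' : 0%R \in G -> ratio_equiv G V e e' ->
  ratio_equiv G W (restrict V e) (restrict V e').
Proof.
move=> G0 H i j _ _ q qG; rewrite /restrict.
have Hz k : k \in V -> (e k = Mzero <-> e' k = Mzero) by exact: ratio_equiv_zero G0 H.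
case: (boolP (i \in V)) => iV; case: (boolP (j \in V)) => jV.
- exact: H.
- by rewrite !Mscaler0; exact: Hz i iV.
- by rewrite !Mzero_eq_scale (Hz j jV).
- by rewrite !Mscaler0.
Qed.

Section RatioInvariance.
Variables (S : signature) (ok : sig_idx S -> Prop) (G0 : seq rat).
Hypothesis G0_0 : 0%R \in G0.
Hypothesis G0_1 : 1%R \in G0.
Hypothesis atom_invariant : forall i (args : 'I_(sig_ar i) -> nat) V e e', ok i ->
  ratio_equiv G0 V e e' -> (forall j, args j \in V) ->
  (@sig_interp S i (fun j => e (args j)) <-> @sig_interp S i (fun j => e' (args j))).

Theorem sat_ratio_invariant (p : formula S) k V e e' :
  all_atoms ok p -> (depth p <= k)%N -> ratio_equiv (ratio_iter G0 k) V e e' ->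
  {subset fv p <= V} -> (sat e p <-> sat e' p).
Proof.
elim: p k V e e' => [x y|i args||p IH|p IHp q IHq|p IHp q IHq|p IHp q IHq|x p IH|x p IH]
  k V e e' /= ok_p dp H fvV;
  try (case: ok_p => ok_p ok_q; rewrite geq_max in dp; case/andP: dp => dp dq;
       rewrite (IHp k V e e') ?(IHq k V e e') // => z zfv; apply: fvV;
       by rewrite mem_cat zfv ?orbT).
- have := H x y (fvV x (mem_head _ _)) (fvV y _) 1%R (mem_ratio_iter k G0_1).
  by rewrite !Mscale1r; apply; rewrite !inE eqxx orbT.
- apply: atom_invariant ok_p _ _ => [|j].
    by apply: ratio_equiv_sub_ratios H => q; exact: mem_ratio_iter.
  by apply: fvV; apply: map_f; exact: mem_enum.
- by [].
- by rewrite (IH k V e e').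
- case: k dp H => // k dp H; have fvV' := fv_binder_sub fvV.
  split=> -[a Ha].
    have [a' H'] := ratio_equiv_extend x a H.
    by exists a'; rewrite -(IH k _ _ _ ok_p dp H' fvV').
  have [a' H'] := ratio_equiv_extend x a (ratio_equiv_sym H).
  by exists a'; rewrite (IH k _ _ _ ok_p dp (ratio_equiv_sym H') fvV').
- case: k dp H => // k dp H; have fvV' := fv_binder_sub fvV.
  split=> Hall a.
    have [a' H'] := ratio_equiv_extend x a (ratio_equiv_sym H).
    by rewrite -(IH k _ _ _ ok_p dp (ratio_equiv_sym H') fvV').
  have [a' H'] := ratio_equiv_extend x a H.
  by rewrite (IH k _ _ _ ok_p dp H' fvV').
Qed.

Lemma definable_ratio_invariant P V psi :
  all_atoms ok psi -> (forall e, P e <-> sat e psi) -> depends_on P V ->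
  forall e e', ratio_equiv (ratio_iter G0 (depth psi)) V e e' -> (P e <-> P e').
Proof.
move=> ok_psi Hpsi depP e e' H.
rewrite (depends_on_restrict e depP) (depends_on_restrict e' depP) !Hpsi.
apply: (sat_ratio_invariant ok_psi (leqnn _) _ (fun _ => id)).
exact/ratio_equiv_restrict/H/mem_ratio_iter.
Qed.
End RatioInvariance.



Fixpoint ratios (p : formula sig_scal) : seq rat :=
  match p with
  | @FRel _ r _ => [:: (r : rat)]
  | FNot p => ratios p
  | FAnd p q | FOr p q | FImp p q => ratios p ++ ratios q
  | FEx _ p | FAll _ p => ratios p
  | _ => [::]
  end.

Lemma all_atoms_ratios (G : seq rat) (p : formula sig_scal) :
  {subset ratios p <= G} -> all_atoms (fun r : sig_idx sig_scal => (r : rat) \in G) p.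
Proof.
elim: p => //= [r _|p IHp q IHq|p IHp q IHq|p IHp q IHq] sG;
  try by split; [apply: IHp | apply: IHq] => z z1; apply: sG; rewrite mem_cat z1 ?orbT.
by apply: sG; rewrite inE eqxx.
Qed.

Definition assign_of n (u : 'I_n -> M) : nat -> M :=
  fun k => if (insub k : option 'I_n) is Some i then u i else Mzero.

Lemma assign_ofE n (u : 'I_n -> M) (i : 'I_n) : assign_of u i = u i.
Proof. by rewrite /assign_of valK. Qed.

Lemma assign_of_lt n (u : 'I_n -> M) k (lt_kn : (k < n)%N) :
  assign_of u k = u (Ordinal lt_kn).
Proof. by rewrite /assign_of insubT. Qed.

Lemma depends_on_ord n (R : relM n) :
  depends_on (fun e => R (fun i : 'I_n => e i)) (iota 0 n).
Proof.
move=> e e' E; suff -> : (fun i : 'I_n => e i) = (fun i : 'I_n => e' i) by [].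
by apply: functional_extensionality => i; apply: E; rewrite mem_iota ltn_ord.
Qed.

Lemma two_definable_ratio_invariant n (R : relM n) : two_definable R ->
  exists G : seq rat, [/\ 0%R \in G, 1%R \in G &
    forall (args : 'I_n -> nat) V e e', ratio_equiv G V e e' -> (forall j, args j \in V) ->
      (R (fun j => e (args j)) <-> R (fun j => e' (args j)))].
Proof.
case=> phi Hphi; set G0 : seq rat := [:: 0%R, 1%R & ratios phi].
have G0_0 : 0%R \in G0 by rewrite inE eqxx.
have G0_1 : 1%R \in G0 by rewrite !inE eqxx orbT.
have atom_inv (r : sig_idx sig_scal) args V e e' : r \in G0 -> ratio_equiv G0 V e e' ->
    (forall j, args j \in V) ->
    (@sig_interp sig_scal r (fun j => e (args j)) <->
     @sig_interp sig_scal r (fun j => e' (args j))).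
  by move=> rG H argsV; exact: H (argsV _) (argsV _) r rG.
have ok_phi : all_atoms (fun r : sig_idx sig_scal => (r : rat) \in G0) phi.
  by apply: all_atoms_ratios => r rphi; rewrite !inE rphi !orbT.
have invR := definable_ratio_invariant G0_0 G0_1 atom_inv ok_phi Hphi (depends_on_ord R).
exists (ratio_iter G0 (depth phi)); split; try exact: mem_ratio_iter.
move=> args V e e' H argsV.
have assignE (f : nat -> M) :
    (fun j => f (args j)) = (fun i : 'I_n => assign_of (fun j => f (args j)) i).
  by apply: functional_extensionality => i; rewrite assign_ofE.
rewrite (assignE e) (assignE e'); apply: invR => i j; rewrite !mem_iota /=.
move=> lt_in lt_jn q qG; rewrite !(assign_of_lt _ lt_in) !(assign_of_lt _ lt_jn).
exact: H (argsV _) (argsV _) q qG.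
Qed.

Definition Rdefinable n (R : relM n) (P : (nat -> M) -> Prop) :=
  exists psi : formula (sig_single R), forall e, P e <-> sat e psi.

Lemma Rdefinable_ratio_invariant n (R : relM n) P V :
  two_definable R -> depends_on P V -> Rdefinable R P ->
  exists G : seq rat, forall e e', ratio_equiv G V e e' -> (P e <-> P e').
Proof.
move=> defR depP [psi Hpsi]; have [GR [GR0 GR1 invR]] := two_definable_ratio_invariant defR.
exists (ratio_iter GR (depth psi)).
apply: (definable_ratio_invariant GR0 GR1 _ (all_atoms_true psi) Hpsi depP).
by move=> i args V' f f' _; exact: invR.
Qed.

(** * Quantifying over fresh values *)

Lemma ratio_equiv_refl G V e : ratio_equiv G V e e.
Proof. by move=> *; split. Qed.

Lemma fresh_eq_on G W e e' y : (forall j, j \in W -> e j = e' j) ->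
  fresh G W e y -> fresh G W e' y.
Proof. by move=> E [y0 Fy]; split=> // j q jW qG q0; rewrite -E //; exact: Fy. Qed.

Lemma fresh_upd_invariant G V t P e y f :
  (forall e e', ratio_equiv G V e e' -> (P e <-> P e')) ->
  fresh G [seq x <- V | x != t] e y -> fresh G [seq x <- V | x != t] e f ->
  (P (upd e t y) <-> P (upd e t f)).
Proof.
move=> invP Fy Ff; apply/invP/(ratio_equiv_sub_vars (V := t :: V)).
  by move=> v vV; rewrite inE vV orbT.
exact: ratio_equiv_upd_fresh (@ratio_equiv_refl G V e) (fun _ _ => iff_refl _) Fy Ff.
Qed.

Definition at_fresh G V t P (e : nat -> M) :=
  exists f, fresh G [seq x <- V | x != t] e f /\ P (upd e t f).

Lemma at_freshE G V t P e : (forall e e', ratio_equiv G V e e' -> (P e <-> P e')) ->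
  at_fresh G V t P e <-> forall f, fresh G [seq x <- V | x != t] e f -> P (upd e t f).
Proof.
move=> invP; split=> [[f0 [Ff0 Pf0]] f Ff|Hall].
  by rewrite -(fresh_upd_invariant invP Ff0 Ff).
have [y [Fy _]] := exists_fresh G [seq x <- V | x != t] e [::] e.
by exists y; split=> //; exact: Hall.
Qed.

Lemma depends_on_at_fresh G V t P : depends_on P V ->
  depends_on (at_fresh G V t P) [seq x <- V | x != t].
Proof.
move=> depP e e' E.
have EP f : P (upd e t f) <-> P (upd e' t f).
  apply: depP => i iV; rewrite /upd; case: eqVneq => // it.
  by apply: E; rewrite mem_filter it.
split=> -[f [Ff Pf]]; exists f.
  by split; [exact: fresh_eq_on Ff | rewrite -EP].
by split; [apply: fresh_eq_on Ff => j jW; rewrite E | rewrite EP].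
Qed.

Definition nonfresh G W (e : nat -> M) : seq M :=
  Mzero :: [seq Mscale p.2 (e p.1) | p <- [seq (j, q) | j <- W, q <- G ++ map GRing.inv G]].

Lemma size_nonfresh G W e e' : size (nonfresh G W e) = size (nonfresh G W e').
Proof. by rewrite /= !size_map. Qed.

Lemma fresh_of_avoid_nonfresh G W e y :
  (forall i, (i < size (nonfresh G W e))%N -> y <> nth Mzero (nonfresh G W e) i) ->
  fresh G W e y.
Proof.
move=> Hy; set ps := [seq (j, q) | j <- W, q <- G ++ map GRing.inv G].
have avoid p : p \in ps -> y <> Mscale p.2 (e p.1).
  move=> pps; have := Hy (index p ps).+1.
  by rewrite /= ltnS size_map index_mem pps (nth_map (0%N, 0%R)) ?index_mem ?nth_index //; apply.
split=> [|j q jW qG q0]; first exact: (Hy 0%N).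
split=> [|E]; first by apply: (avoid (j, q)); apply: allpairs_f; rewrite // mem_cat qG.
apply: (avoid (j, q^-1%R)); first by apply: allpairs_f; rewrite // mem_cat map_f ?orbT.
by rewrite /= E MscaleA mulVf // Mscale1r.
Qed.

Fixpoint exists_block {S : signature} (N K : nat) (p : formula S) : formula S :=
  if K is K'.+1 then FEx N (exists_block N.+1 K' p) else p.

Definition override (N K : nat) (h e : nat -> M) : nat -> M :=
  fun v => if (N <= v < N + K)%N then h v else e v.

Lemma override_upd N K h e a :
  override N.+1 K h (upd e N a) = override N K.+1 (fun v => if v == N then a else h v) e.
Proof.
apply: functional_extensionality => v; rewrite /override /upd.
case: (eqVneq v N) => [->|vN].
  have -> : (N.+1 <= N < N.+1 + K)%N = false by lia.
  by have -> : (N <= N < N + K.+1)%N = true by lia.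
by have -> : (N.+1 <= v < N.+1 + K)%N = (N <= v < N + K.+1)%N by apply/idP/idP; lia.
Qed.

Lemma sat_exists_block (S : signature) N K (p : formula S) e :
  sat e (exists_block N K p) <-> exists h, sat (override N K h e) p.
Proof.
elim: K N e => [|K IH] N e /=.
  have E h : override N 0 h e = e.
    by apply: functional_extensionality => v; rewrite /override addn0 ltnNge andbN.
  by split=> [Hp|[h]]; [exists e; rewrite E | rewrite E].
split=> [[a /IH [h Hh]]|[h Hh]].
  by exists (fun v => if v == N then a else h v); rewrite -override_upd.
exists (h N); apply/IH; exists h; rewrite override_upd.
suff -> : (fun v => if v == N then h N else h v) = h by [].
by apply: functional_extensionality => v; case: eqP => [->|].
Qed.

Definition Fdistinct {S : signature} (t : nat) (L : seq nat) : formula S :=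
  foldr (fun k acc => FAnd (FNot (FEq S t k)) acc) (FNot (FFalse S)) L.

Lemma sat_Fdistinct (S : signature) t L e :
  sat e (@Fdistinct S t L) <-> forall k, k \in L -> e t <> e k.
Proof.
elim: L => [|k L IH] /=; first by split=> // _ k.
rewrite IH; split=> [[tk tL] k'|Hall].
  by rewrite inE => /orP[/eqP->|]; [exact: tk | exact: tL].
by split=> [|k' k'L]; apply: Hall; rewrite inE ?eqxx ?k'L ?orbT.
Qed.

Definition avoid_ex (s : nat) (L : seq nat) (P : (nat -> M) -> Prop) (e : nat -> M) :=
  exists y, (forall k, k \in L -> y <> e k) /\ P (upd e s y).

Lemma depends_on_not P V : depends_on P V -> depends_on (fun e => ~ P e) V.
Proof. by move=> depP e e' E; rewrite (depP e e' E). Qed.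

Lemma depends_on_iff P V (c : Prop) : depends_on P V -> depends_on (fun e => P e <-> c) V.
Proof. by move=> depP e e' E; rewrite (depP e e' E). Qed.

Lemma depends_on_avoid_ex s L P : depends_on P (s :: L) -> depends_on (avoid_ex s L P) L.
Proof.
move=> depP e e' E.
have EP y : P (upd e s y) <-> P (upd e' s y).
  by apply: depP => i; rewrite inE /upd; case: eqP => //= _ /E.
split=> -[y [yL Py]]; exists y.
  by split; [move=> k kL; rewrite -E //; exact: yL | rewrite -EP].
by split; [move=> k kL; rewrite E //; exact: yL | rewrite EP].
Qed.

Section DefinableFromR.
Variables (n : nat) (R : relM n).

Lemma Rdefinable_ext P Q : (forall e, P e <-> Q e) -> Rdefinable R P -> Rdefinable R Q.
Proof. by move=> PQ [psi Hpsi]; exists psi => e; rewrite -PQ. Qed.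

Lemma Rdefinable_not P : Rdefinable R P -> Rdefinable R (fun e => ~ P e).
Proof. by move=> [psi Hpsi]; exists (FNot psi) => e /=; rewrite Hpsi. Qed.

Lemma Rdefinable_iff P (c : Prop) : Rdefinable R P -> Rdefinable R (fun e => P e <-> c).
Proof.
move=> defP; case: (classic c) => [c_true|c_false].
  by apply: Rdefinable_ext defP => e; split=> [Pe|[_ cP]]; [split | exact: cP].
apply: Rdefinable_ext (Rdefinable_not defP) => e.
split=> [nP|[Pc _] Pe]; last exact: c_false (Pc Pe).
by split=> [/nP|/c_false].
Qed.

Lemma Rdefinable_subst P i j : i != j -> Rdefinable R P ->
  Rdefinable R (fun e => P (upd e j (e i))).
Proof.
move=> ij [psi Hpsi]; exists (FEx j (FAnd (FEq _ j i) psi)) => e /=.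
split=> [Pe|[a []]]; first by exists (e i); rewrite upd_eq upd_neq // -Hpsi.
by rewrite upd_eq upd_neq // => ->; rewrite -Hpsi.
Qed.

Lemma Rdefinable_avoid_ex s L P : s \notin L -> Rdefinable R P ->
  Rdefinable R (avoid_ex s L P).
Proof.
move=> sL [psi Hpsi]; exists (FEx s (FAnd (Fdistinct s L) psi)) => e /=.
have Lneq k : k \in L -> k != s by move=> kL; apply: contraNneq sL => <-.
split=> -[y [yL Py]]; exists y; split.
- by apply/sat_Fdistinct => k kL; rewrite upd_eq upd_neq ?Lneq //; exact: yL.
- by rewrite -Hpsi.
- move=> k kL; move/sat_Fdistinct: yL => /(_ k kL).
  by rewrite upd_eq upd_neq ?Lneq.
- by rewrite Hpsi.
Qed.

Lemma Rdefinable_at_fresh G V t P : depends_on P V -> Rdefinable R P ->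
  (forall e e', ratio_equiv G V e e' -> (P e <-> P e')) -> t \in V ->
  Rdefinable R (at_fresh G V t P).
Proof.
move=> depP [psi Hpsi] invP tV.
set W := [seq x <- V | x != t]; set K := size (nonfresh G W (fun _ => Mzero)).
set N0 := (\max_(v <- V) v).+1.
have VN v : v \in V -> (v < N0)%N by move=> vV; rewrite ltnS; exact: leq_bigmax_seq.
have tN := VN t tV.
(* "For some values [h k], k in [iota N0 K], every value of t outside them satisfies
   psi": the witnesses are the non-fresh values. *)
exists (exists_block N0 K (FAll t (FImp (Fdistinct t (iota N0 K)) psi))) => e.
rewrite sat_exists_block.
have hk h a k : k \in iota N0 K -> upd (override N0 K h e) t a k = h k.
  by rewrite mem_iota => kK; rewrite upd_neq /override ?kK //; apply/eqP; lia.
have avoid h a : sat (upd (override N0 K h e) t a) (Fdistinct t (iota N0 K)) <->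
    forall k, k \in iota N0 K -> a <> h k.
  rewrite sat_Fdistinct upd_eq.
  by split=> Ha k kK; have := Ha k kK; rewrite (hk _ _ _ kK).
have satP h a : sat (upd (override N0 K h e) t a) psi <-> P (upd e t a).
  rewrite -Hpsi; apply: depP => v vV; rewrite /upd; case: eqP => // _.
  by rewrite /override; have -> : (N0 <= v < N0 + K)%N = false by have := VN v vV; lia.
split=> [Fe|[h Hh]].
  exists (fun v => nth Mzero (nonfresh G W e) (v - N0)) => a /avoid Ha.
  apply/satP/(proj1 (at_freshE t e invP) Fe).
  apply: fresh_of_avoid_nonfresh => i; rewrite (size_nonfresh _ _ e (fun _ => Mzero)) => iK.
  by have := Ha (N0 + i); rewrite addKn mem_iota leq_addr ltn_add2l; apply.
have [y [Fy yh]] := exists_fresh G W e (iota N0 K) h.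
by exists y; split=> //; apply/(satP h); apply: (Hh y); apply/avoid.
Qed.

End DefinableFromR.

(** * Relations definable from R only see equalities *)

Definition eq_invariant (P : (nat -> M) -> Prop) (V : seq nat) :=
  forall e e', (forall i j, i \in V -> j \in V -> (e i = e j <-> e' i = e' j)) ->
    (P e <-> P e').

Definition inj_on (e : nat -> M) (V : seq nat) :=
  forall i j, i \in V -> j \in V -> e i = e j -> i = j.

Lemma inj_on_cons e s V : inj_on e (s :: V) -> inj_on e V.
Proof. by move=> ie i j iV jV; apply: ie; rewrite inE ?iV ?jV orbT. Qed.

Lemma Munit_inj_on V : inj_on Munit V.
Proof. by move=> i j _ _ /Munit_inj. Qed.

Lemma inj_on_eq_iff e e' V : inj_on e V -> inj_on e' V ->
  forall i j, i \in V -> j \in V -> (e i = e j <-> e' i = e' j).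
Proof. by move=> ie ie' i j iV jV; split=> [/(ie i j iV jV)|/(ie' i j iV jV)] ->. Qed.

Lemma not_iff_iff_not (A B : Prop) : ~ (A <-> B) -> (A <-> ~ B).
Proof. by move=> nAB; case: (classic A); case: (classic B); tauto. Qed.

Lemma size_filter_neq_lt (V : seq nat) t : t \in V ->
  (size [seq v <- V | v != t] < size V)%N.
Proof.
elim: V => //= a V IH; rewrite inE; case: (eqVneq a t) => [->|a_t] /= tV.
  by rewrite ltnS size_filter count_size.
by rewrite ltnS; exact: IH.
Qed.

Lemma exists_mem_neq (V : seq nat) k : uniq V -> (2 <= size V)%N ->
  exists2 t, t \in V & t != k.
Proof.
case: V => [|a [|b V]] //= /andP[ab _] _.
case: (eqVneq a k) => [ak|ak]; last by exists a; rewrite ?inE ?eqxx.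
exists b; first by rewrite !inE eqxx orbT.
by apply: contraNneq ab => ->; rewrite inE ak eqxx.
Qed.

Definition on_axis (y : M) := exists k0, forall i, i != k0 -> Mseq y i = 0%R.

Lemma fresh_Munit_off_axis G W y : ~ on_axis y -> fresh G W Munit y.
Proof.
move=> offy; split=> [y0|j q _ _ q0]; first by apply: offy; exists 0%N => i _; rewrite y0.
split=> E; apply: offy; exists j => i ij.
  by rewrite E Mseq_scale Mseq_unit (negbTE ij) mulr0.
have -> : y = Mscale q^-1 (Munit j) by rewrite E MscaleA mulVf // Mscale1r.
by rewrite Mseq_scale Mseq_unit (negbTE ij) mulr0.
Qed.

Lemma at_fresh_Munit G V t P e :
  (forall e e', ratio_equiv G V e e' -> (P e <-> P e')) ->
  e t = Munit t -> (forall j, j \in V -> j != t -> Mseq (e j) t = 0%R) ->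
  at_fresh G V t P e <-> P e.
Proof.
move=> invP et et0.
have Fe : fresh G [seq x <- V | x != t] e (Munit t).
  by apply: fresh_Munit => j; rewrite mem_filter => /andP[jt jV]; exact: et0.
have ue : upd e t (Munit t) = e by rewrite -et upd_same.
split=> [/(at_freshE t e invP)/(_ _ Fe)|Pe]; first by rewrite ue.
by exists (Munit t); rewrite ue.
Qed.

(* Off the coordinate axes, [y] would be fresh for the basis and hence
   interchangeable with [Munit s]. *)
Lemma on_axis_of_flip G s V P y :
  (forall e e', ratio_equiv G (s :: V) e e' -> (P e <-> P e')) ->
  (P (upd Munit s y) <-> ~ P Munit) -> on_axis y.
Proof.
move=> invP Py; apply: NNPP => /(fresh_Munit_off_axis G [seq v <- s :: V | v != s]) Fy.
have Fs : fresh G [seq v <- s :: V | v != s] Munit (Munit s).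
  apply: fresh_Munit => j; rewrite mem_filter => /andP[js _].
  by rewrite Mseq_unit eq_sym (negbTE js).
by move: Py; rewrite (fresh_upd_invariant invP Fy Fs) upd_same; tauto.
Qed.

Lemma inj_on_upd_Munit s V y : (forall k, k \in V -> y <> Munit k) ->
  inj_on (upd Munit s y) (s :: V).
Proof.
move=> yV i j; rewrite /upd !inE.
case: (eqVneq i s) => [->|i_s]; case: (eqVneq j s) => [->|j_s] //= iV jV.
- by move=> E; case: (yV j jV E).
- by move=> E; case: (yV i iV (esym E)).
- exact: Munit_inj.
Qed.

Section EqualityInvariance.
Variables (n : nat) (R : relM n).
Hypothesis defR : two_definable R.
Hypothesis zero_undef : ~ definable (sig_single R) zero_rel.

Lemma not_Rdefinable_zero : ~ Rdefinable R (fun e => e 0%N = Mzero).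
Proof. by move=> [psi Hpsi]; apply: zero_undef; exists psi. Qed.

Lemma unary_constant j P : depends_on P [:: j] -> Rdefinable R P ->
  forall e e', P e <-> P e'.
Proof.
move=> depP defP; have [G invP] := Rdefinable_ratio_invariant defR depP defP.
have inv e e' : (e j = Mzero <-> e' j = Mzero) -> (P e <-> P e').
  move=> Ej; apply: invP => i i'; rewrite !inE => /eqP-> /eqP-> q _.
  exact: scale_self_iff.
pose z (_ : nat) := Mzero.
suff Pz e : P e <-> P z by move=> e e'; rewrite (Pz e) (Pz e').
case: (classic (e j = Mzero)) => e0; first by apply: inv; split.
apply: NNPP => nPez; apply: not_Rdefinable_zero.
pose Q x := P (upd x j (x 0%N)).
have defQ : Rdefinable R Q.
  case: (eqVneq j 0%N) => [j0|j0]; last by apply: Rdefinable_subst defP; rewrite eq_sym.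
  by apply: Rdefinable_ext defP => x; rewrite /Q -j0 upd_same.
(* [Q x <-> P z] would define {0}. *)
apply: Rdefinable_ext (Rdefinable_iff (P z) defQ) => x; rewrite /Q.
case: (classic (x 0%N = Mzero)) => x0.
  rewrite (_ : P (upd x j (x 0%N)) <-> P z); last by apply: inv; rewrite upd_eq x0.
  by split=> // _; exact: iff_refl.
rewrite (_ : P (upd x j (x 0%N)) <-> P e); first by split=> [/nPez|/x0].
by apply: inv; rewrite upd_eq; split=> E; [case: x0 | case: e0].
Qed.

Lemma binary_constant s k P : s != k -> depends_on P [:: s; k] -> Rdefinable R P ->
  exists c : Prop, forall x, x s <> x k -> (P x <-> c).
Proof.
move=> sk depP defP; have [G invP] := Rdefinable_ratio_invariant defR depP defP.
have s_k : s \notin [:: k] by rewrite inE.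
have Pconst := unary_constant (depends_on_avoid_ex depP) (Rdefinable_avoid_ex s_k defP).
have nPconst := unary_constant (depends_on_avoid_ex (depends_on_not depP))
  (Rdefinable_avoid_ex s_k (Rdefinable_not defP)).
pose z (_ : nat) := Mzero.
have Wk : [seq v <- [:: s; k] | v != s] = [:: k] by rewrite /= eqxx eq_sym sk.
have fresh_z y : (forall k', k' \in [:: k] -> y <> z k') ->
    fresh G [seq v <- [:: s; k] | v != s] z y.
  by move=> yk; rewrite Wk; apply: fresh_zero; exact: yk k (mem_head _ _).
exists (avoid_ex s [:: k] P z) => x xsk.
have x_avoid k' : k' \in [:: k] -> x s <> x k' by rewrite inE => /eqP->.
split=> [Px|[y [yk Py]]]; first by apply/(Pconst x); exists (x s); rewrite upd_same.
apply: NNPP => nPx.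
have [y' [y'k nPy']] : avoid_ex s [:: k] (fun e => ~ P e) z.
  by apply/(nPconst x); exists (x s); rewrite upd_same.
by apply: nPy'; rewrite -(fresh_upd_invariant invP (fresh_z y yk) (fresh_z y' y'k)).
Qed.

Lemma injective_constant s V P : uniq (s :: V) -> (2 <= size V)%N ->
  depends_on P (s :: V) -> Rdefinable R P ->
  (forall W Q, uniq W -> (size W < size (s :: V))%N -> depends_on Q W -> Rdefinable R Q ->
     eq_invariant Q W) ->
  forall x, inj_on x (s :: V) -> (P x <-> P Munit).
Proof.
move=> uV sizeV depP defP IH x xinj.
have [G invP] := Rdefinable_ratio_invariant defR depP defP.
move: (uV); rewrite cons_uniq => /andP[sV uV'].
have Vs k : k \in V -> k != s by move=> kV; apply: contraNneq sV => <-.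
have sVk k : k \in V -> k \in s :: V by rewrite inE => ->; rewrite orbT.
apply: NNPP => nPx; set c := ~ P Munit.
have eqQ : eq_invariant (avoid_ex s V (fun z => P z <-> c)) V.
  apply: IH uV' (ltnSn _) (depends_on_avoid_ex (depends_on_iff c depP)) _.
  exact: Rdefinable_avoid_ex sV (Rdefinable_iff c defP).
have [y [yV Py]] : avoid_ex s V (fun z => P z <-> c) Munit.
  apply/(eqQ x); first exact: inj_on_eq_iff (inj_on_cons xinj) (@Munit_inj_on V).
  exists (x s); rewrite upd_same; split; last exact: not_iff_iff_not.
  move=> k kV /(xinj s k (mem_head _ _) (sVk k kV)) sk.
  by move: (Vs k kV); rewrite sk eqxx.
have [k0 y_axis] := on_axis_of_flip invP Py.
have [t tV tk0] := exists_mem_neq k0 uV' sizeV.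
set u := upd Munit s y; have u_inj : inj_on u (s :: V) := inj_on_upd_Munit yV.
have invF : eq_invariant (at_fresh G (s :: V) t P) [seq v <- s :: V | v != t].
  apply: IH (filter_uniq _ uV) (size_filter_neq_lt (sVk t tV)) _ _.
    exact: depends_on_at_fresh.
  exact: Rdefinable_at_fresh depP defP invP (sVk t tV).
have Fu : at_fresh G (s :: V) t P u <-> P u.
  apply: at_fresh_Munit invP _ _; first by rewrite /u upd_neq ?Vs.
  move=> j _ jt; rewrite /u /upd; case: eqP => _; first exact: y_axis t tk0.
  by rewrite Mseq_unit eq_sym (negbTE jt).
have Fg : at_fresh G (s :: V) t P Munit <-> P Munit.
  apply: at_fresh_Munit invP erefl _ => j _ jt.
  by rewrite Mseq_unit eq_sym (negbTE jt).
have : P u <-> P Munit.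
  rewrite -Fu -Fg; apply: invF => i j; rewrite !mem_filter => /andP[_ iV] /andP[_ jV].
  exact: inj_on_eq_iff u_inj (@Munit_inj_on _) i j iV jV.
by move: Py; rewrite /c; tauto.
Qed.

Lemma inj_on_constant V P : uniq V -> depends_on P V -> Rdefinable R P ->
  (forall W Q, uniq W -> (size W < size V)%N -> depends_on Q W -> Rdefinable R Q ->
     eq_invariant Q W) ->
  forall x x', inj_on x V -> inj_on x' V -> (P x <-> P x').
Proof.
case: V => [|s [|k [|l V]]] uV depP defP IH x x' ix ix'.
- by apply: depP => i; rewrite in_nil.
- exact: unary_constant depP defP x x'.
- have sk : s != k by move: uV; rewrite /= inE andbT.
  have [c Pc] := binary_constant sk depP defP.
  have neq z : inj_on z [:: s; k] -> z s <> z k.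
    move=> iz /(iz s k); rewrite !inE !eqxx orbT => /(_ isT isT) /eqP.
    by rewrite (negbTE sk).
  by rewrite (Pc x) ?(Pc x') //; exact: neq.
- by rewrite (injective_constant uV _ depP defP IH ix) // (injective_constant uV _ depP defP IH ix').
Qed.

Lemma eq_invariant_merge V P i j e e' : uniq V -> depends_on P V -> Rdefinable R P ->
  (forall W Q, uniq W -> (size W < size V)%N -> depends_on Q W -> Rdefinable R Q ->
     eq_invariant Q W) ->
  i \in V -> j \in V -> i != j -> e i = e j ->
  (forall a b, a \in V -> b \in V -> (e a = e b <-> e' a = e' b)) -> (P e <-> P e').
Proof.
move=> uV depP defP IH iV jV ij eij Ee.
pose P' x := P (upd x j (x i)).
have iW : i \in [seq v <- V | v != j] by rewrite mem_filter ij iV.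
have depP' : depends_on P' [seq v <- V | v != j].
  move=> x x' E; apply: depP => v vV; rewrite /upd; case: eqVneq => [_|vj].
    exact: E i iW.
  by apply: E; rewrite mem_filter vj.
have invP' := IH _ P' (filter_uniq _ uV) (size_filter_neq_lt jV) depP' (Rdefinable_subst ij defP).
have e'ij : e' i = e' j by apply/(Ee i j iV jV).
have -> : P e <-> P' e by rewrite /P' eij upd_same.
have -> : P e' <-> P' e' by rewrite /P' e'ij upd_same.
by apply: invP' => a b; rewrite !mem_filter => /andP[_ aV] /andP[_ bV]; exact: Ee.
Qed.

Theorem Rdefinable_eq_invariant V P : uniq V -> depends_on P V -> Rdefinable R P ->
  eq_invariant P V.
Proof.
move Hm : (size V) => m; elim/ltn_ind: m V P Hm => m IH V P sizeV uV depP defP e e' Ee.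
have IH' W Q : uniq W -> (size W < size V)%N -> depends_on Q W -> Rdefinable R Q ->
    eq_invariant Q W.
  by rewrite sizeV => uW ltW; exact: IH _ ltW W Q erefl uW.
case: (classic (exists i j, [/\ i \in V, j \in V, i != j & e i = e j])).
  by move=> [i [j [iV jV ij eij]]]; exact: eq_invariant_merge uV depP defP IH' iV jV ij eij Ee.
move=> inj_e; have ie : inj_on e V.
  by move=> i j iV jV eij; apply: NNPP => /eqP ij; apply: inj_e; exists i, j.
have ie' : inj_on e' V by move=> i j iV jV /(Ee i j iV jV); exact: ie.
exact: inj_on_constant uV depP defP IH' e e' ie ie'.
Qed.

End EqualityInvariance.

(** * Equality types *)

Fixpoint eq_pattern (ps : seq (nat * nat)) (tau : seq bool) : formula sig_eq :=
  match ps, tau with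
  | (a, b) :: ps', c :: tau' =>
      FAnd (if c then FEq _ a b else FNot (FEq _ a b)) (eq_pattern ps' tau')
  | _, _ => FNot (FFalse _)
  end.

Fixpoint matches (e : nat -> M) (ps : seq (nat * nat)) (tau : seq bool) : Prop :=
  match ps, tau with
  | (a, b) :: ps', c :: tau' => (e a = e b <-> c) /\ matches e ps' tau'
  | _, _ => True
  end.

Lemma sat_eq_pattern e ps tau : sat e (eq_pattern ps tau) <-> matches e ps tau.
Proof.
elim: ps tau => [|[a b] ps IH] [|c tau] /=; try by split=> // _ [].
rewrite IH; case: c => /=; split=> -[eab m]; split=> //;
  solve [exact: (proj2 eab isT) | by split=> // /eab [] | by move/(proj1 eab)].
Qed.

Fixpoint bitseqs (L : nat) : seq (seq bool) :=
  if L is L'.+1 then map (cons true) (bitseqs L') ++ map (cons false) (bitseqs L')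
  else [:: [::]].

Lemma size_bitseqs L tau : tau \in bitseqs L -> size tau = L.
Proof.
elim: L tau => [|L IH] tau /=; first by rewrite inE => /eqP->.
by rewrite mem_cat => /orP[] /mapP[t tL ->] /=; rewrite IH.
Qed.

Lemma matches_exists e ps : exists2 tau, tau \in bitseqs (size ps) & matches e ps tau.
Proof.
elim: ps => [|[a b] ps [tau taups m]] /=; first by exists [::]; rewrite ?inE.
case: (classic (e a = e b)) => eab.
  by exists (true :: tau); rewrite ?mem_cat ?map_f.
by exists (false :: tau); rewrite ?mem_cat ?map_f ?orbT //; split=> // /eab.
Qed.

Lemma matches_eq_iff e e' ps tau : size tau = size ps ->
  matches e ps tau -> matches e' ps tau ->
  forall a b, (a, b) \in ps -> (e a = e b <-> e' a = e' b).
Proof.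
elim: ps tau => [|[a b] ps IH] [|c tau] //= [sz] [eab m] [e'ab m'] a' b'.
by rewrite inE => /orP[/eqP [-> ->]|abps]; [rewrite eab e'ab | exact: IH m m' a' b' abps].
Qed.

Lemma eq_pattern_disj ps (good : seq bool -> Prop) (ts : seq (seq bool)) :
  exists phi : formula sig_eq, forall e,
    sat e phi <-> exists2 tau, tau \in ts & good tau /\ matches e ps tau.
Proof.
elim: ts => [|tau ts [phi Hphi]]; first by exists (FFalse _) => e; split=> // -[].
case: (classic (good tau)) => gt.
  exists (FOr (eq_pattern ps tau) phi) => e /=; rewrite sat_eq_pattern Hphi.
  split=> [[m|[t tts gm]]|[t]]; first by exists tau; rewrite ?mem_head.
    by exists t; rewrite // inE tts orbT.
  by rewrite inE => /orP[/eqP->|tts] [gm m]; [left | right; exists t].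
exists phi => e; rewrite Hphi; split=> [[t tts gm]|[t]].
  by exists t; rewrite // inE tts orbT.
by rewrite inE => /orP[/eqP->|tts] [gt' m]; [case: (gt gt') | exists t].
Qed.

Lemma eq_invariant_definable n (R : relM n) :
  eq_invariant (fun e => R (fun i : 'I_n => e i)) (iota 0 n) -> definable sig_eq R.
Proof.
move=> invR; set ps := [seq (i, j) | i <- iota 0 n, j <- iota 0 n].
pose good tau := exists e0, matches e0 ps tau /\ R (fun i : 'I_n => e0 i).
have [phi Hphi] := eq_pattern_disj ps good (bitseqs (size ps)).
exists phi => e; rewrite Hphi; split=> [Re|[tau taups [[e0 [m0 Re0]] m]]].
  have [tau taups m] := matches_exists e ps.
  by exists tau => //; split=> //; exists e.
apply/(invR e e0) => // i j iV jV.
exact: matches_eq_iff (size_bitseqs taups) m m0 _ _ (allpairs_f pair iV jV).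
Qed.

Theorem mainTheorem3 (n : nat) (R : relM n) :
  two_definable R ->
  ~ definable sig_eq R ->
  definable (sig_single R) zero_rel.
Proof.
move=> defR eq_undef; apply: NNPP => zero_undef; apply: eq_undef.
apply: eq_invariant_definable.
apply: (Rdefinable_eq_invariant defR zero_undef (iota_uniq 0 n) (depends_on_ord R)).
by exists (@FRel (sig_single R) tt (fun j : 'I_n => j)).
Qed.
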